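(* Let $\mathcal A$, $\mathcal A_1$, $\mathcal A_2$, $\Pi_1,\Pi_2$ be as in the context, and let $\mathcal B$ be a bialgebra with a nondegenerate pairing $\langle\cdot,\cdot\rangle:\mathcal A\otimes\mathcal B\to\mathbb C$ satisfying $\langle a,b_1b_2\rangle=\langle\Delta(a),b_1\otimes b_2\rangle$ and $\langle a_1a_2,b\rangle=\langle a_2\otimes a_1,\Delta(b)\rangle$. Let $\mathcal R=\sum_\alpha a^\alpha\otimes b_\alpha$ be the canonical tensor of the pairing ($\{a^\alpha\},\{b_\alpha\}$ dual bases). Put $\mathcal R_i=(\Pi_i\otimes\mathrm{id})\mathcal R$, $i=1,2$. Then $\mathcal R=\mathcal R_1\cdot\mathcal R_2$ (product in $\mathcal A\hat\otimes\mathcal B$).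
   Context: $\mathcal A$ is a bialgebra with unit, comultiplication $\Delta$ and counit $\varepsilon$; $\mathcal A_1,\mathcal A_2\subset\mathcal A$ are subalgebras such that multiplication $\mathcal A_1\otimes\mathcal A_2\to\mathcal A$ is a linear isomorphism, $\Delta(\mathcal A_1)\subset\mathcal A\otimes\mathcal A_1$, $\Delta(\mathcal A_2)\subset\mathcal A_2\otimes\mathcal A$; $\Pi_1(a_1a_2)=a_1\varepsilon(a_2)$, $\Pi_2(a_1a_2)=\varepsilon(a_1)a_2$ ($a_i\in\mathcal A_i$). To make dual bases meaningful assume $\mathcal A,\mathcal B$ are graded with finite-dimensional homogeneous components, the pairing is nondegenerate between corresponding components, and tensors are taken in the completed tensor product $\mathcal A\hat\otimes\mathcal B$. Dual bases means $\sum_\alpha\langle a^\alpha,b\rangle b_\alpha=b$ for all $b\in\mathcal B$ and $\sum_\alpha a^\alpha\langle a,b_\alpha\rangle=a$ for all $a\in\mathcal A$. *)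

(* Abstract (possibly infinite-dimensional) vector spaces are
   MathComp lmodTypes / algTypes over a field K; tensor products are given by
   their universal property (is_tensor); maps induced on tensor products
   (f (x) g, multiplication of A (x) B, (x) of pairings, ...) are obtained from
   that universal property via [tmap]. *)
From HB Require Import structures.
From mathcomp Require Import all_boot all_order all_algebra.
From Stdlib Require Import ClassicalEpsilon.
Set Implicit Arguments. Unset Strict Implicit. Unset Printing Implicit Defensive.
Import GRing.Theory.
Local Open Scope ring_scope.

Definition is_lin (K : fieldType) (U V : lmodType K) (f : U -> V) : Prop :=
  forall (c : K) (x y : U), f (c *: x + y) = c *: f x + f y.

Definition is_bilin (K : fieldType) (U V W : lmodType K) (f : U -> V -> W) : Prop :=
  (forall v, is_lin (fun u => f u v)) /\ (forall u, is_lin (f u)).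

Definition is_tensor (K : fieldType) (U V W : lmodType K) (t : U -> V -> W) : Prop :=
  is_bilin t /\
  forall (X : lmodType K) (f : U -> V -> X), is_bilin f ->
    exists g : W -> X, [/\ is_lin g, (forall u v, g (t u v) = f u v) &
      forall g' : W -> X, is_lin g' -> (forall u v, g' (t u v) = f u v) ->
        forall w, g' w = g w].

Definition tmap (K : fieldType) (U V W X : lmodType K)
    (t : U -> V -> W) (f : U -> V -> X) : W -> X :=
  epsilon (inhabits (fun _ : W => (0 : X)))
    (fun g : W -> X => is_lin g /\ forall u v, g (t u v) = f u v).

Definition tmul (K : fieldType) (A B : algType K) (W : lmodType K)
    (t : A -> B -> W) (w w' : W) : W :=
  tmap t (fun x y => tmap t (fun x' y' => t (x * x') (y * y')) w') w.

Definition is_bialgebra (K : fieldType) (A : algType K) (AA A3 : lmodType K)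
    (tAA : A -> A -> AA) (tA3 : AA -> A -> A3) (D : A -> AA) (eps : A -> K) : Prop :=
  [/\ is_tensor tAA, is_tensor tA3, is_lin D,
      (forall (c : K) (x y : A), eps (c *: x + y) = c * eps x + eps y) &
   [/\ eps 1 = 1, (forall x y, eps (x * y) = eps x * eps y),
       D 1 = tAA 1 1, (forall x y, D (x * y) = tmul tAA (D x) (D y)) &
   [/\ (* coassociativity: (D (x) id) D = (id (x) D) D *)
       (forall a, tmap tAA (fun x y => tA3 (D x) y) (D a)
                = tmap tAA (fun x y => tmap tAA (fun p q => tA3 (tAA x p) q) (D y)) (D a)),
       (* counit: (eps (x) id) D = id = (id (x) eps) D *)
       (forall a, tmap tAA (fun x y => eps x *: y) (D a) = a) &
       (forall a, tmap tAA (fun x y => eps y *: x) (D a) = a)]]].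

(* a grading V = (+)_{n : nat} V_n given by the projections p n : V -> V_n,
   with finite-dimensional homogeneous components *)
Definition is_grading (K : fieldType) (V : lmodType K) (p : nat -> V -> V) : Prop :=
  [/\ (forall n, is_lin (p n)),
      (forall n m x, p n (p m x) = if n == m then p m x else 0),
      (forall x, exists N, (forall n, (N <= n)%N -> p n x = 0) /\
                           x = \sum_(n < N) p n x) &
      (forall n, exists s : seq V, forall x,
          exists c : nat -> K, p n x = \sum_(i < size s) c i *: s`_i)].

Definition is_graded_bialgebra (K : fieldType) (A : algType K) (AA A3 : lmodType K)
    (tAA : A -> A -> AA) (tA3 : AA -> A -> A3) (D : A -> AA) (eps : A -> K)
    (p : nat -> A -> A) : Prop :=
  [/\ is_bialgebra tAA tA3 D eps, is_grading p,
      p 0%N 1 = 1,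
      (forall n m x y, p n x = x -> p m y = y -> p (n + m)%N (x * y) = x * y) &
   [/\ (forall n x, p n x = x ->
          D x = \sum_(i < n.+1) tmap tAA (fun u v => tAA (p i u) (p (n - i)%N v)) (D x)) &
       (forall n x, (0 < n)%N -> p n x = x -> eps x = 0)]].

Definition is_subalgebra (K : fieldType) (A : algType K) (S : A -> Prop) : Prop :=
  [/\ S 1, (forall (c : K) x y, S x -> S y -> S (c *: x + y)) &
      (forall x y, S x -> S y -> S (x * y))].

(* multiplication A1 (x) A2 -> A is a linear isomorphism.  A1 (x) A2 is viewed
   as the subspace of A (x) A spanned by the x (x) y, x in A1, y in A2 *)
Definition mult_iso (K : fieldType) (A : algType K) (AA : lmodType K)
    (tAA : A -> A -> AA) (A1 A2 : A -> Prop) : Prop :=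
  (forall a, exists s : seq (A * A),
      (forall q, q \in s -> A1 q.1 /\ A2 q.2) /\ a = \sum_(q <- s) q.1 * q.2) /\
  (forall s : seq (A * A), (forall q, q \in s -> A1 q.1 /\ A2 q.2) ->
      \sum_(q <- s) q.1 * q.2 = 0 -> \sum_(q <- s) tAA q.1 q.2 = 0).

(* element of A (x) B given by the (k,m)-homogeneous component (in A_k (x) B_m)
   of the formal series  sum_alpha f(a^alpha) (x) b_alpha , where e n lists the
   pairs (a^alpha, b_alpha) of degree n (only those with b_alpha in B_m
   contribute to the component (k,m)) *)
Definition cser (K : fieldType) (A B : lmodType K) (AB : lmodType K)
    (tAB : A -> B -> AB) (pA : nat -> A -> A) (pB : nat -> B -> B)
    (e : nat -> seq (A * B)) (f : A -> A) (k m : nat) : AB :=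
  \sum_(q <- e m) tAB (pA k (f q.1)) (pB m q.2).

(* product in the completed tensor product  A ^(x) B = prod_{k,m} A_k (x) B_m ,
   elements being represented by their families of homogeneous components *)
Definition cmul (K : fieldType) (W : lmodType K) (mul : W -> W -> W)
    (F G : nat -> nat -> W) (n m : nat) : W :=
  \sum_(i < n.+1) \sum_(j < m.+1)
      mul (F i j) (G (n - i)%N (m - j)%N).

(* Contracting the B-leg of R1 R2 against the dual basis and using
   <a, b b'> = <D a, b (x) b'> shows that the coefficient of b_alpha in R1 R2 is
   m (Pi1 (x) Pi2) D (a^alpha).  This composite is the identity of A: writing
   a = a1 a2 with a_i in A_i, multiplicativity of D, D(A1) in A (x) A1,
   D(A2) in A2 (x) A and the counit axioms reduce it to Pi1 a1 * Pi2 a2 = a1 a2.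
   Hence R1 R2 = sum_alpha a^alpha (x) b_alpha = R. *)

From HB Require Import structures.
From mathcomp Require Import all_boot all_order all_algebra.
From mathcomp Require Import complex Rstruct.
From Stdlib Require Import ClassicalEpsilon FunctionalExtensionality.
Set Implicit Arguments. Unset Strict Implicit. Unset Printing Implicit Defensive.
Import GRing.Theory.
Local Open Scope ring_scope.

Lemma sum_ord_single (V : nmodType) (M j : nat) (ltjM : (j < M)%N) (F : 'I_M -> V) :
  (forall i : 'I_M, val i != j -> F i = 0) -> \sum_(i < M) F i = F (Ordinal ltjM).
Proof. by move=> F0; rewrite (bigD1 (Ordinal ltjM)) //= big1 ?addr0. Qed.

Section LinearMaps.

Variables (K : fieldType) (U V : lmodType K) (f : U -> V).
Hypothesis f_lin : is_lin f.

Lemma is_lin0 : f 0 = 0.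
Proof.
have := f_lin 1 0 0; rewrite !scale1r addr0 => f00.
by apply: (addrI (f 0)); rewrite addr0 -f00.
Qed.

Lemma is_linD x y : f (x + y) = f x + f y.
Proof. by have := f_lin 1 x y; rewrite !scale1r. Qed.

Lemma is_linZ c x : f (c *: x) = c *: f x.
Proof. by have := f_lin c x 0; rewrite !addr0 is_lin0 addr0. Qed.

Lemma is_lin_sum (I : Type) (r : seq I) (P : pred I) (F : I -> U) :
  f (\sum_(i <- r | P i) F i) = \sum_(i <- r | P i) f (F i).
Proof. exact: (big_morph f is_linD is_lin0). Qed.

End LinearMaps.

Lemma is_lin_comp (K : fieldType) (U V W : lmodType K) (f : V -> W) (g : U -> V) :
  is_lin f -> is_lin g -> is_lin (f \o g).
Proof. by move=> fl gl c x y /=; rewrite gl fl. Qed.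

Lemma is_lin_mulr (K : fieldType) (R : algType K) (x : R) : is_lin ( *%R^~ x).
Proof. by move=> c y z; rewrite mulrDl -scalerAl. Qed.

Lemma is_lin_mull (K : fieldType) (R : algType K) (x : R) : is_lin ( *%R x).
Proof. by move=> c y z; rewrite mulrDr -scalerAr. Qed.

Section BilinearMaps.

Variables (K : fieldType) (U V W : lmodType K).

Lemma is_bilin_flip (f : V -> U -> W) : is_bilin f -> is_bilin (fun u v => f v u).
Proof. by case=> fl fr; split. Qed.

Lemma is_bilin_comp (U' V' : lmodType K) (t : U' -> V' -> W) (f : U -> U') (g : V -> V') :
  is_bilin t -> is_lin f -> is_lin g -> is_bilin (fun u v => t (f u) (g v)).
Proof. by case=> tl tr fl gl; split=> [v | u] c x y /=; rewrite ?fl ?gl ?tl ?tr. Qed.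

Lemma is_bilin_mul (R : algType K) (f : U -> R) (g : V -> R) :
  is_lin f -> is_lin g -> is_bilin (fun u v => f u * g v).
Proof.
move=> fl gl; split=> [v | u] c x y /=.
- by rewrite fl mulrDl -scalerAl.
- by rewrite gl mulrDr -scalerAr.
Qed.

Lemma is_bilin_scale (phi : U -> K) :
  is_lin (fun u => phi u : K^o) -> is_bilin (fun u (v : W) => phi u *: v).
Proof.
move=> phil; split=> [v | u] c x y /=.
- by rewrite phil scalerDl scalerA.
- by rewrite scalerDr !scalerA mulrC.
Qed.

End BilinearMaps.

Section TensorMaps.

Variables (K : fieldType) (U V W X : lmodType K) (t : U -> V -> W).
Hypothesis t_tensor : is_tensor t.

Section Induced.

Variable f : U -> V -> X.
Hypothesis f_bilin : is_bilin f.

Lemma tmap_spec : is_lin (tmap t f) /\ forall u v, tmap t f (t u v) = f u v.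
Proof.
case: t_tensor => _ /(_ X f f_bilin) [g [g_lin gt _]].
apply: (epsilon_spec (inhabits (fun _ : W => (0 : X)))
  (fun g : W -> X => is_lin g /\ forall u v, g (t u v) = f u v)).
by exists g.
Qed.

Lemma tmap_lin : is_lin (tmap t f).
Proof. by case: tmap_spec. Qed.

Lemma tmapE u v : tmap t f (t u v) = f u v.
Proof. by case: tmap_spec. Qed.

Lemma tmap_sum (I : Type) (r : seq I) (F : I -> U) (G : I -> V) :
  tmap t f (\sum_(i <- r) t (F i) (G i)) = \sum_(i <- r) f (F i) (G i).
Proof. by rewrite (is_lin_sum tmap_lin); apply: eq_bigr => i _; rewrite tmapE. Qed.

Lemma tmap_sum_pairs (s : seq (U * V)) :
  tmap t f (\sum_(q <- s) t q.1 q.2) = \sum_(q <- s) f q.1 q.2.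
Proof. exact: tmap_sum. Qed.

Lemma tmap_sum2 (I J : Type) (r : seq I) (r' : seq J) (F : I -> J -> U) (G : I -> J -> V) :
  tmap t f (\sum_(i <- r) \sum_(j <- r') t (F i j) (G i j))
  = \sum_(i <- r) \sum_(j <- r') f (F i j) (G i j).
Proof. by rewrite (is_lin_sum tmap_lin); apply: eq_bigr => i _; apply: tmap_sum. Qed.

End Induced.

Definition pure_sum (w : W) := exists s : seq (U * V), w = \sum_(q <- s) t q.1 q.2.

Lemma pure_sum_tensor u v : pure_sum (t u v).
Proof. by exists [:: (u, v)]; rewrite big_seq1. Qed.

Lemma pure_sum_big (I : Type) (r : seq I) (P : pred I) (F : I -> W) :
  (forall i, P i -> pure_sum (F i)) -> pure_sum (\sum_(i <- r | P i) F i).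
Proof.
move=> F_pure; elim: r => [|i r [s sE]]; first by exists [::]; rewrite !big_nil.
rewrite big_cons sE; case: ifP => [/F_pure [si ->]|]; last by exists s.
by exists (si ++ s); rewrite big_cat.
Qed.

End TensorMaps.

Lemma tmul_sum (K : fieldType) (A B : algType K) (W : lmodType K) (t : A -> B -> W)
    (I J : Type) (r : seq I) (r' : seq J)
    (F : I -> A) (G : I -> B) (F' : J -> A) (G' : J -> B) :
  is_tensor t ->
  tmul t (\sum_(i <- r) t (F i) (G i)) (\sum_(j <- r') t (F' j) (G' j))
  = \sum_(i <- r) \sum_(j <- r') t (F i * F' j) (G i * G' j).
Proof.
move=> t_tensor; have [t_bilin _] := t_tensor.
rewrite /tmul.
have -> : (fun x y => tmap t (fun x' y' => t (x * x') (y * y'))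
            (\sum_(j <- r') t (F' j) (G' j)))
          = (fun x y => \sum_(j <- r') t (x * F' j) (y * G' j)).
  apply: functional_extensionality => x; apply: functional_extensionality => y.
  exact/tmap_sum/is_bilin_comp/is_lin_mull/is_lin_mull.
apply: tmap_sum => //; split=> [v | u] c x y /=;
  rewrite scaler_sumr -big_split; apply: eq_bigr => j _;
  have [Fl Fr] := is_bilin_comp t_bilin (is_lin_mulr (F' j)) (is_lin_mulr (G' j)).
- exact: Fl.
- exact: Fr.
Qed.

Lemma grading_sum (K : fieldType) (V : lmodType K) (p : nat -> V -> V) x :
  is_grading p -> exists N, forall M, (N <= M)%N -> x = \sum_(n < M) p n x.
Proof.
case=> _ _ /(_ x) [N [pN0 xE]] _; exists N => M leNM.
rewrite {1}xE (big_ord_widen M (p^~ x) leNM) big_mkcond /=.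
by apply: eq_bigr => i _; case: ifP => // /negbT; rewrite -leqNgt => /pN0 ->.
Qed.

Lemma grading_mulE (K : fieldType) (A : algType K) (p : nat -> A -> A) :
  is_grading p ->
  (forall n m x y, p n x = x -> p m y = y -> p (n + m)%N (x * y) = x * y) ->
  forall k x y, p k (x * y) = \sum_(i < k.+1) p i x * p (k - i)%N y.
Proof.
move=> p_grading p_mul k x y; have [p_lin p_idem _ _] := p_grading.
have [N1 xE] := grading_sum x p_grading; have [N2 yE] := grading_sum y p_grading.
pose M := maxn (maxn N1 N2) k.+1.
have leN1M : (N1 <= M)%N by rewrite !leq_max leqnn.
have leN2M : (N2 <= M)%N by rewrite !leq_max leqnn orbT.
have leKM : (k.+1 <= M)%N by rewrite leq_max leqnn orbT.
have p_hom a b : p (a + b)%N (p a x * p b y) = p a x * p b y by apply: p_mul; rewrite p_idem eqxx.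
rewrite {1}(xE M leN1M) {1}(yE M leN2M) mulr_suml (is_lin_sum (p_lin k)).
rewrite (big_ord_widen M (fun a => p a x * p (k - a)%N y) leKM) [RHS]big_mkcond.
apply: eq_bigr => a _; rewrite mulr_sumr (is_lin_sum (p_lin k)).
under eq_bigr => b _ do rewrite -p_hom p_idem p_hom.
case: ifP => [ltak | geak]; last first.
  by rewrite big1 // => b _; case: eqP => // eq_k; rewrite eq_k ltnS leq_addr in geak.
have ltkaM : (k - a < M)%N by apply: leq_ltn_trans (leq_subr _ _) leKM.
rewrite (sum_ord_single ltkaM) /=; first by rewrite subnKC ?eqxx // -ltnS.
move=> b neq_b; case: eqP => // eq_k; case/negP: neq_b.
by rewrite eq_k addKn.
Qed.

Section DualBases.

Variables (K : fieldType) (A B : lmodType K) (pA : nat -> A -> A) (pB : nat -> B -> B).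
Variables (pair : A -> B -> K) (e : nat -> seq (A * B)).
Hypotheses (pA_grading : is_grading pA)
  (pair_linl : forall b, is_lin (fun a => pair a b : K^o))
  (pair_graded : forall n m a b, n != m -> pair (pA n a) (pB m b) = 0)
  (e_hom : forall n q, q \in e n -> pA n q.1 = q.1 /\ pB n q.2 = q.2)
  (e_B : forall b, exists N : nat, forall M : nat, (N <= M)%N ->
     \sum_(n < M) \sum_(q <- e n) pair q.1 b *: q.2 = b)
  (e_A : forall a, exists N : nat, forall M : nat, (N <= M)%N ->
     \sum_(n < M) \sum_(q <- e n) pair a q.2 *: q.1 = a).

Lemma pair_proj_hom j a b : pB j b = b -> pair a b = pair (pA j a) b.
Proof.
move=> b_hom; have [N aE] := grading_sum a pA_grading.
rewrite {1}(aE _ (leq_maxl N j.+1)) (is_lin_sum (pair_linl b)).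
by rewrite (sum_ord_single (leq_maxr _ _)) // => n neq_nj; rewrite -b_hom pair_graded.
Qed.

Lemma dual_basis_projA j a : \sum_(q <- e j) pair a q.2 *: q.1 = pA j a.
Proof.
have [N eA] := e_A (pA j a).
rewrite -[RHS](eA _ (leq_maxl N j.+1)) (sum_ord_single (leq_maxr _ _)) /=.
  apply: eq_big_seq => q /e_hom[_ q2_hom].
  by rewrite (pair_proj_hom _ q2_hom).
move=> n neq_nj; apply: big1_seq => q /e_hom[_ <-].
by rewrite pair_graded ?scale0r // eq_sym.
Qed.

Lemma dual_basis_homB n b : pB n b = b -> \sum_(q <- e n) pair q.1 b *: q.2 = b.
Proof.
move=> b_hom; have [N eB] := e_B b.
rewrite -[RHS](eB _ (leq_maxl N n.+1)) (sum_ord_single (leq_maxr _ _)) // => m neq_mn.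
by apply: big1_seq => q /e_hom[<- _]; rewrite -b_hom pair_graded ?scale0r.
Qed.

End DualBases.

Section Factorization.

Variables (K : fieldType) (A : algType K) (AA A3 : lmodType K).
Variables (tAA : A -> A -> AA) (tA3 : AA -> A -> A3) (DA : A -> AA) (epsA : A -> K).
Variables (A1 A2 : A -> Prop) (Pi1 Pi2 : A -> A).
Hypotheses (A_bialg : is_bialgebra tAA tA3 DA epsA)
  (A1_subalg : is_subalgebra A1) (A2_subalg : is_subalgebra A2)
  (A_span : forall a, exists s : seq (A * A),
     (forall q, q \in s -> A1 q.1 /\ A2 q.2) /\ a = \sum_(q <- s) q.1 * q.2)
  (DA1 : forall x, A1 x -> exists s : seq (A * A),
     (forall q, q \in s -> A1 q.2) /\ DA x = \sum_(q <- s) tAA q.1 q.2)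
  (DA2 : forall x, A2 x -> exists s : seq (A * A),
     (forall q, q \in s -> A2 q.1) /\ DA x = \sum_(q <- s) tAA q.1 q.2)
  (Pi1_lin : is_lin Pi1) (Pi2_lin : is_lin Pi2)
  (Pi1_mul : forall x y, A1 x -> A2 y -> Pi1 (x * y) = epsA y *: x)
  (Pi2_mul : forall x y, A1 x -> A2 y -> Pi2 (x * y) = epsA x *: y).

Let tAA_tensor : is_tensor tAA. Proof. by case: A_bialg. Qed.
Let DA_lin : is_lin DA. Proof. by case: A_bialg. Qed.
Let epsA_lin : is_lin (fun a => epsA a : K^o). Proof. by case: A_bialg. Qed.
Let epsA1 : epsA 1 = 1. Proof. by case: A_bialg => _ _ _ _ []. Qed.
Let epsAM x y : epsA (x * y) = epsA x * epsA y.
Proof. by case: A_bialg => _ _ _ _ []. Qed.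
Let DAM x y : DA (x * y) = tmul tAA (DA x) (DA y).
Proof. by case: A_bialg => _ _ _ _ []. Qed.

Lemma Pi1_mulr_A2 x y : A2 y -> Pi1 (x * y) = epsA y *: Pi1 x.
Proof.
have [_ _ A2M] := A2_subalg; move=> A2y; have [s [s_sub ->]] := A_span x.
rewrite mulr_suml !(is_lin_sum Pi1_lin) scaler_sumr; apply: eq_big_seq => q /s_sub[A1q1 A2q2].
have A2q2y : A2 (q.2 * y) by exact: A2M.
by rewrite -mulrA !Pi1_mul // epsAM scalerA mulrC.
Qed.

Lemma Pi2_mull_A1 x y : A1 x -> Pi2 (x * y) = epsA x *: Pi2 y.
Proof.
have [_ _ A1M] := A1_subalg; move=> A1x; have [s [s_sub ->]] := A_span y.
rewrite mulr_sumr !(is_lin_sum Pi2_lin) scaler_sumr; apply: eq_big_seq => q /s_sub[A1q1 A2q2].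
have A1xq1 : A1 (x * q.1) by exact: A1M.
by rewrite mulrA !Pi2_mul // epsAM scalerA.
Qed.

Lemma Pi1_A1 x : A1 x -> Pi1 x = x.
Proof. by case: A2_subalg => A21 _ _ A1x; rewrite -{1}[x]mulr1 Pi1_mul // epsA1 scale1r. Qed.

Lemma Pi2_A2 y : A2 y -> Pi2 y = y.
Proof. by case: A1_subalg => A11 _ _ A2y; rewrite -{1}[y]mul1r Pi2_mul // epsA1 scale1r. Qed.

Lemma coproduct_pure_sum a : pure_sum tAA (DA a).
Proof.
have [s [s_sub ->]] := A_span a; rewrite (is_lin_sum DA_lin) big_seq.
apply: pure_sum_big => q /s_sub[/DA1[s1 [_ DAx]] /DA2[s2 [_ DAy]]].
rewrite DAM DAx DAy tmul_sum //.
by do 2!apply: pure_sum_big => ? _; apply: pure_sum_tensor.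
Qed.

Lemma mul_Pi12_coproduct a : tmap tAA (fun u v => Pi1 u * Pi2 v) (DA a) = a.
Proof.
have Pi12_bilin := is_bilin_mul Pi1_lin Pi2_lin.
have [s [s_sub ->]] := A_span a; rewrite (is_lin_sum DA_lin).
rewrite (is_lin_sum (tmap_lin tAA_tensor Pi12_bilin)).
apply: eq_big_seq => q /s_sub[A1x A2y].
have [s1 [s1_A1 DAx]] := DA1 A1x; have [s2 [s2_A2 DAy]] := DA2 A2y.
have [_ _ _ _ [_ _ _ _ [_ counitl counitr]]] := A_bialg.
have x_counit : \sum_(p <- s1) epsA p.2 *: p.1 = q.1.
  rewrite -[RHS]counitr DAx tmap_sum_pairs //.
  exact/is_bilin_flip/is_bilin_scale.
have y_counit : \sum_(p <- s2) epsA p.1 *: p.2 = q.2.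
  by rewrite -[RHS]counitl DAy tmap_sum_pairs //; apply: is_bilin_scale.
rewrite DAM DAx DAy tmul_sum // tmap_sum2 //.
rewrite -[in RHS](Pi1_A1 A1x) -[in RHS](Pi2_A2 A2y) -x_counit -y_counit.
rewrite (is_lin_sum Pi1_lin) (is_lin_sum Pi2_lin) mulr_suml.
apply: eq_big_seq => p1 /s1_A1 A1p12; rewrite mulr_sumr; apply: eq_big_seq => p2 /s2_A2 A2p21.
rewrite Pi1_mulr_A2 // Pi2_mull_A1 // !(is_linZ Pi1_lin) !(is_linZ Pi2_lin).
by rewrite -!scalerAl -!scalerAr !scalerA mulrC.
Qed.

End Factorization.

Section CanonicalElement.

Variables (K : fieldType) (A B : algType K) (AA AB : lmodType K).
Variables (tAA : A -> A -> AA) (tAB : A -> B -> AB) (DA : A -> AA).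
Variables (pA : nat -> A -> A) (pB : nat -> B -> B).
Variables (pair : A -> B -> K) (e : nat -> seq (A * B)).
Hypotheses (tAA_tensor : is_tensor tAA) (tAB_tensor : is_tensor tAB)
  (pA_grading : is_grading pA)
  (pA_mul : forall n m x y, pA n x = x -> pA m y = y -> pA (n + m)%N (x * y) = x * y)
  (pB_mul : forall n m x y, pB n x = x -> pB m y = y -> pB (n + m)%N (x * y) = x * y)
  (DA_graded : forall n x, pA n x = x ->
     DA x = \sum_(i < n.+1) tmap tAA (fun u v => tAA (pA i u) (pA (n - i)%N v)) (DA x))
  (pair_linl : forall b, is_lin (fun a => pair a b : K^o))
  (pair_graded : forall n m a b, n != m -> pair (pA n a) (pB m b) = 0)
  (pair_coproduct : forall a b1 b2,
     pair a (b1 * b2) = tmap tAA (fun x y => (pair x b1 * pair y b2 : K^o)) (DA a))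
  (e_hom : forall n q, q \in e n -> pA n q.1 = q.1 /\ pB n q.2 = q.2)
  (e_B : forall b, exists N : nat, forall M : nat, (N <= M)%N ->
     \sum_(n < M) \sum_(q <- e n) pair q.1 b *: q.2 = b)
  (e_A : forall a, exists N : nat, forall M : nat, (N <= M)%N ->
     \sum_(n < M) \sum_(q <- e n) pair a q.2 *: q.1 = a).

(* The B-leg of (f (x) id)R . (g (x) id)R, in degree n, contracted with a. *)
Definition dual_conv (f g : A -> A) (a : A) (n : nat) : A :=
  \sum_(j < n.+1) \sum_(q <- e j) \sum_(q' <- e (n - j)%N)
    pair a (q.2 * q'.2) *: (f q.1 * g q'.1).

Lemma dual_conv_lin (X : lmodType K) (h : A -> X) f g a n : is_lin h ->
  h (dual_conv f g a n) = \sum_(j < n.+1) \sum_(q <- e j) \sum_(q' <- e (n - j)%N)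
    pair a (q.2 * q'.2) *: h (f q.1 * g q'.1).
Proof.
move=> h_lin; rewrite (is_lin_sum h_lin); apply: eq_bigr => j _.
rewrite (is_lin_sum h_lin); apply: eq_bigr => q _.
by rewrite (is_lin_sum h_lin); apply: eq_bigr => q' _; rewrite (is_linZ h_lin).
Qed.

Lemma dual_conv_coproduct f g n a :
  is_lin f -> is_lin g -> pA n a = a -> pure_sum tAA (DA a) ->
  dual_conv f g a n = tmap tAA (fun u v => f u * g v) (DA a).
Proof.
move=> f_lin g_lin a_hom [s DAa].
have [pA_lin _ _ _] := pA_grading; have [tAA_bilin _] := tAA_tensor.
have projA := dual_basis_projA pA_grading pair_linl pair_graded e_hom e_A.
have pair_mul b1 b2 : pair a (b1 * b2) = \sum_(p <- s) pair p.1 b1 * pair p.2 b2.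
  rewrite pair_coproduct DAa tmap_sum_pairs //.
  exact: (is_bilin_mul (R := K^o)).
have DA_split : \sum_(i < n.+1) tmap tAA (fun u v => tAA (pA i u) (pA (n - i)%N v))
      (\sum_(p <- s) tAA p.1 p.2)
    = \sum_(i < n.+1) \sum_(p <- s) tAA (pA i p.1) (pA (n - i)%N p.2).
  by apply: eq_bigr => i _; apply: tmap_sum_pairs => //; apply: is_bilin_comp.
rewrite (DA_graded a_hom) DAa DA_split tmap_sum2 //; last exact: is_bilin_mul.
apply: eq_bigr => j _.
under [RHS]eq_bigr => p _ do rewrite -(projA j p.1) -(projA (n - j)%N p.2)
  (is_lin_sum f_lin) (is_lin_sum g_lin) mulr_suml.
under [RHS]eq_bigr => p _ do under eq_bigr => q _ do rewrite mulr_sumr.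
rewrite [RHS]exchange_big /=; apply: eq_bigr => q _.
rewrite [RHS]exchange_big /=; apply: eq_bigr => q' _.
rewrite pair_mul scaler_suml; apply: eq_bigr => p _.
by rewrite (is_linZ f_lin) (is_linZ g_lin) -scalerAl -scalerAr scalerA.
Qed.

Lemma cmul_cser f g k m :
  cmul (tmul tAB) (cser tAB pA pB e f) (cser tAB pA pB e g) k m
  = \sum_(r <- e m) tAB (pA k (dual_conv f g r.1 m)) r.2.
Proof.
have [pA_lin _ _ _] := pA_grading; have [[tABl tABr] _] := tAB_tensor.
have homB := dual_basis_homB pair_graded e_hom e_B.
under [RHS]eq_bigr => r _ do rewrite (@dual_conv_lin _ (fun a => tAB (pA k a) r.2) _ _ _ _
  (is_lin_comp (tABl r.2) (pA_lin k))).
rewrite /cmul /cser /=.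
under eq_bigr => i _ do under eq_bigr => j _ do rewrite (tmul_sum (t := tAB)) //.
rewrite exchange_big /=; rewrite [RHS]exchange_big /=; apply: eq_bigr => j _.
rewrite exchange_big [RHS]exchange_big /=; apply: eq_big_seq => q /e_hom[_ q2_hom].
rewrite exchange_big [RHS]exchange_big /=; apply: eq_big_seq => q' /e_hom[_ q'2_hom].
have b_hom : pB m (q.2 * q'.2) = q.2 * q'.2.
  by have := pB_mul q2_hom q'2_hom; rewrite subnKC // -ltnS.
under [RHS]eq_bigr => r _ do rewrite -(is_linZ (tABr _)).
rewrite -(is_lin_sum (tABr _)) homB // q2_hom q'2_hom.
by rewrite -(is_lin_sum (tABl _)) -grading_mulE.
Qed.

End CanonicalElement.

Theorem mainTheorem10
  (A B : algType (Rdefinitions.R)[i])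
  (AA A3 BB B3 AB : lmodType (Rdefinitions.R)[i])
  (tAA : A -> A -> AA) (tA3 : AA -> A -> A3)
  (tBB : B -> B -> BB) (tB3 : BB -> B -> B3)
  (tAB : A -> B -> AB)
  (DA : A -> AA) (epsA : A -> (Rdefinitions.R)[i]) (pA : nat -> A -> A)
  (DB : B -> BB) (epsB : B -> (Rdefinitions.R)[i]) (pB : nat -> B -> B)
  (A1 A2 : A -> Prop) (Pi1 Pi2 : A -> A)
  (pair : A -> B -> (Rdefinitions.R)[i])
  (* e n lists the pairs (a^alpha, b_alpha) of degree n *)
  (e : nat -> seq (A * B))
  (HA : is_graded_bialgebra tAA tA3 DA epsA pA)
  (HB : is_graded_bialgebra tBB tB3 DB epsB pB)
  (HAB : is_tensor tAB)
  (HA1 : is_subalgebra A1) (HA2 : is_subalgebra A2)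
  (Hmult : mult_iso tAA A1 A2)
  (HD1 : forall x, A1 x -> exists s : seq (A * A),
           (forall q, q \in s -> A1 q.2) /\ DA x = \sum_(q <- s) tAA q.1 q.2)
  (HD2 : forall x, A2 x -> exists s : seq (A * A),
           (forall q, q \in s -> A2 q.1) /\ DA x = \sum_(q <- s) tAA q.1 q.2)
  (HPi1 : is_lin Pi1) (HPi2 : is_lin Pi2)
  (HPi1m : forall x y, A1 x -> A2 y -> Pi1 (x * y) = epsA y *: x)
  (HPi2m : forall x y, A1 x -> A2 y -> Pi2 (x * y) = epsA x *: y)
  (Hpl : forall b, is_lin (fun a => pair a b : (Rdefinitions.R)[i]^o))
  (Hpr : forall a, is_lin (fun b => pair a b : (Rdefinitions.R)[i]^o))
  (Hpgr : forall n m a b, n != m -> pair (pA n a) (pB m b) = 0)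
  (HndA : forall n a, pA n a = a -> (forall b, pB n b = b -> pair a b = 0) -> a = 0)
  (HndB : forall n b, pB n b = b -> (forall a, pA n a = a -> pair a b = 0) -> b = 0)
  (HpD : forall a b1 b2, pair a (b1 * b2)
          = tmap tAA (fun x y => (pair x b1 * pair y b2 : (Rdefinitions.R)[i]^o)) (DA a))
  (HpM : forall a1 a2 b, pair (a1 * a2) b
          = tmap tBB (fun u v => (pair a2 u * pair a1 v : (Rdefinitions.R)[i]^o)) (DB b))
  (He_hom : forall n q, q \in e n -> pA n q.1 = q.1 /\ pB n q.2 = q.2)
  (He_B : forall b, exists N : nat, forall M : nat, leq N M ->
            \sum_(n < M) \sum_(q <- e n) pair q.1 b *: q.2 = b)
  (He_A : forall a, exists N : nat, forall M : nat, leq N M ->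
            \sum_(n < M) \sum_(q <- e n) pair a q.2 *: q.1 = a) :
  (* the (k, m) homogeneous components of R and of R1 . R2 *)
  forall k m : nat,
    cser tAB pA pB e (fun a : A => a) k m
    = cmul (tmul tAB) (cser tAB pA pB e Pi1) (cser tAB pA pB e Pi2) k m.
Proof.
move=> k m.
have [A_bialg pA_grading _ pA_mul [DA_graded _]] := HA.
have [tAA_tensor _ _ _ _] := A_bialg.
have [_ _ _ pB_mul _] := HB.
have [A_span _] := Hmult.
have DA_pure := coproduct_pure_sum A_bialg A_span HD1 HD2.
rewrite (cmul_cser HAB pA_grading pA_mul pB_mul Hpgr He_hom He_B) /cser.
apply: eq_big_seq => r /He_hom[r1_hom r2_hom].
rewrite (dual_conv_coproduct tAA_tensor pA_grading DA_graded Hpl Hpgr HpD He_hom He_A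
  HPi1 HPi2 r1_hom (DA_pure r.1)).
by rewrite (mul_Pi12_coproduct A_bialg HA1 HA2 A_span HD1 HD2 HPi1 HPi2 HPi1m HPi2m) r2_hom.
Qed.
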